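(* Let $\mathbf{x}_1,\dots,\mathbf{x}_N\in\mathbb{R}^d$ be strictly linearly separable, i.e. there exists $\mathbf{w}_*\in\mathbb{R}^d$ with $\mathbf{w}_*^\top\mathbf{x}_n>0$ for all $n$. Let $\ell:\mathbb{R}\to\mathbb{R}$ be positive, differentiable, with $\beta$-Lipschitz derivative, $\ell'(u)<0$ for all $u$, $\lim_{u\to\infty}\ell(u)=\lim_{u\to\infty}\ell'(u)=0$, and $\limsup_{u\to-\infty}\ell'(u)\neq 0$. Let $\eta>0$ and let $B$ be a positive integer with $K=N/B$ an integer. For any starting point $\mathbf{w}(0)\in\mathbb{R}^d$, let $\mathbf{w}(t)$ be the iterates of stochastic gradient descent $$\mathbf{w}(t+1)=\mathbf{w}(t)-\frac{\eta}{B}\sum_{n\in\mathcal{B}(t)}\ell'\big(\mathbf{w}(t)^\top\mathbf{x}_n\big)\mathbf{x}_n,$$ where each minibatch $\mathcal{B}(t)\subset\{1,\dots,N\}$ consists of $B$ distinct indices and the minibatches are chosen according to either sampling regime (random sampling with replacement, or sampling without replacement) described in the context. Then $\|\mathbf{w}(t)\|\to\infty$ as $t\to\infty$.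
   Context: Sampling regimes. (Random sampling with replacement): at each iteration $t$ a minibatch $\mathcal{B}(t)$ of $B$ distinct indices is sampled randomly and uniformly (independently across iterations), so that each sample has identical probability of being selected. (Sampling without replacement): at each epoch the minibatches partition the data, i.e. for every $u\in\{0,1,2,\dots\}$, $\bigcup_{k=0}^{K-1}\mathcal{B}(Ku+k)=\{1,\dots,N\}$ (the order may be arbitrary, even adversarial). *)

From HB Require Import structures.
From mathcomp Require Import all_boot all_order all_algebra.
From mathcomp Require Import all_classical all_reals all_analysis.
Set Implicit Arguments. Unset Strict Implicit. Unset Printing Implicit Defensive.
Import Order.TTheory GRing.Theory Num.Theory.
Import numFieldNormedType.Exports.
Local Open Scope ring_scope.

Definition dotv {R : realType} {d : nat} (u v : 'rV[R]_d) : R :=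
  \sum_(i < d) u 0 i * v 0 i.

Definition normv {R : realType} {d : nat} (u : 'rV[R]_d) : R :=
  Num.sqrt (dotv u u).

Definition limsup_ninfty {R : realType} (f : R -> R) : \bar R :=
  limf_esup (fun u => (f u)%:E) (ninfty_nbhs R).

Definition sgd_step {R : realType} {d N : nat} (ell : R -> R) (eta : R) (B : nat)
  (x : 'I_N -> 'rV[R]_d) (Bt : {set 'I_N}) (w : 'rV[R]_d) : 'rV[R]_d :=
  w - (eta / B%:R) *: \sum_(n in Bt) (derive1 ell (dotv w (x n))) *: x n.

(* Sampling regime, random sampling with replacement, as a property of a
   realization: every minibatch consists of B distinct indices (drawn i.i.d.
   uniformly; the conclusion is proved for every realization). *)
Definition random_sampling_path {N : nat} (B : nat) (Bt : nat -> {set 'I_N}) : Prop :=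
  forall t, #|Bt t| = B.

(* Sampling without replacement: minibatches of B distinct indices, and the
   K = N/B minibatches of each epoch partition {1..N} (arbitrary order). *)
Definition without_replacement {N : nat} (B : nat) (Bt : nat -> {set 'I_N}) : Prop :=
  (forall t, #|Bt t| = B) /\
  forall u : nat, \bigcup_(k < N %/ B) Bt (N %/ B * u + k)%N = [set: 'I_N].

(* The margin a t := w*^T w(t) never decreases: an SGD step adds
   eta/B * sum_n (-ell')(w(t)^T x_n) (w*^T x_n) >= 0.  Fix A.  While
   ||w(t)|| < A, every w(t)^T x_n lies in a fixed compact interval, on which the
   continuous function -ell' is bounded below by some m > 0; as moreover
   w*^T x_n >= gamma > 0, the margin then grows by at least eta/B * m * gamma.
   But at such times it is also at most A ||w*||_1, so ||w(t)|| < A can only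
   happen finitely often. *)
From HB Require Import structures.
From mathcomp Require Import all_boot all_order all_algebra.
From mathcomp Require Import all_classical all_reals all_analysis.
Import Order.TTheory GRing.Theory Num.Theory.
Import numFieldNormedType.Exports.
Local Open Scope ring_scope.
Local Open Scope classical_set_scope.

Section RealFacts.
Context {R : realType}.

Lemma ler_sum_term {I : finType} (P : pred I) (F : I -> R) j :
  P j -> (forall i, P i -> 0 <= F i) -> F j <= \sum_(i | P i) F i.
Proof.
move=> Pj F0; rewrite (bigD1 j) //= lerDl.
by apply: sumr_ge0 => i /andP[Pi _]; exact: F0.
Qed.

Lemma finite_pos_lbound {I : finType} (g : I -> R) :
  (forall i, 0 < g i) -> exists2 m, 0 < m & forall i, m <= g i.
Proof.
move=> g0; have S0 : 0 < 1 + \sum_i (g i)^-1.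
  by rewrite ltr_pwDl // sumr_ge0 // => i _; rewrite invr_ge0 ltW.
exists (1 + \sum_i (g i)^-1)^-1; first by rewrite invr_gt0.
move=> i; rewrite -[g i]invrK lef_pV2 ?posrE ?invr_gt0 //.
have ginv_ge0 j : xpredT j -> 0 <= (g j)^-1 by rewrite invr_ge0 ltW.
apply: le_trans (ler_sum_term xpredT _ i isT ginv_ge0) _.
by rewrite lerDr.
Qed.

Lemma continuous_pos_lbound_itv (f : R -> R) (a b : R) :
  continuous f -> (forall u, 0 < f u) ->
  exists2 m, 0 < m & forall u, a <= u <= b -> m <= f u.
Proof.
move=> cf f0; have [ab|ba] := leP a b; last first.
  by exists 1 => // u /andP[au ub]; move: (le_trans au ub); rewrite leNgt ba.
have [c _ fc_min] := EVT_min ab (continuous_subspaceT cf).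
by exists (f c) => // u abu; apply: fc_min; rewrite in_itv.
Qed.

Lemma lipschitz_continuous (f : R -> R) (k : R) :
  (forall u v, `|f u - f v| <= k * `|u - v|) -> continuous f.
Proof.
move=> lip u; apply/cvgrPdist_le => e e0.
have k1 : 0 < `|k| + 1 by rewrite ltr_wpDl.
apply/nbhs_ballP; exists (e / (`|k| + 1)) => /=; first exact: divr_gt0.
move=> v /= uv; apply: le_trans (lip u v) _.
apply: (@le_trans _ _ ((`|k| + 1) * `|u - v|)).
  by apply: ler_wpM2r => //; apply: le_trans (ler_norm _) _; rewrite lerDl.
by rewrite -ler_pdivlMl // mulrC ltW.
Qed.

Lemma nondecreasing_jumps_eventually_stop (a : nat -> R) (P : nat -> Prop)
    (delta M : R) :
  0 < delta -> nondecreasing_seq a ->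
  (forall t, P t -> a t + delta <= a t.+1) -> (forall t, P t -> a t <= M) ->
  \forall t \near \oo, ~ P t.
Proof.
move=> delta0 a_mono jump bounded; apply: contrapT => not_eventually.
have often T : exists2 t, (T <= t)%N & P t.
  apply: contrapT => none; apply: not_eventually; exists T => // t /= Tt Pt.
  by apply: none; exists t.
have grow k : exists t, a 0%N + k%:R * delta <= a t.
  elim: k => [|k [T aT]]; first by exists 0%N; rewrite mul0r addr0.
  have [t Tt Pt] := often T; exists t.+1; apply: le_trans (jump t Pt).
  rewrite mulrSr mulrDl mul1r addrA lerD2r.
  exact: le_trans aT (a_mono _ _ Tt).
pose k := Num.Def.archi_bound `|(M - a 0%N) / delta|.
have Mk : M < a 0%N + k%:R * delta.
  rewrite -ltrBlDl -ltr_pdivrMr //.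
  exact: le_lt_trans (ler_norm _) (archi_boundP (normr_ge0 _)).
have [T aT] := grow k; have [t Tt Pt] := often T.
have := le_trans aT (le_trans (a_mono _ _ Tt) (bounded t Pt)).
by rewrite leNgt Mk.
Qed.

End RealFacts.

Section Dot.
Context {R : realType} {d : nat}.
Implicit Types u v : 'rV[R]_d.

Lemma dotvC u v : dotv u v = dotv v u.
Proof. by apply: eq_bigr => i _; rewrite mulrC. Qed.

Lemma dotvD u v1 v2 : dotv u (v1 + v2) = dotv u v1 + dotv u v2.
Proof. by rewrite /dotv -big_split; apply: eq_bigr => i _; rewrite mxE mulrDr. Qed.

Lemma dotvB u v1 v2 : dotv u (v1 - v2) = dotv u v1 - dotv u v2.
Proof. by rewrite /dotv -sumrB; apply: eq_bigr => i _; rewrite !mxE mulrBr. Qed.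

Lemma dotvZ u a v : dotv u (a *: v) = a * dotv u v.
Proof. by rewrite /dotv mulr_sumr; apply: eq_bigr => i _; rewrite mxE mulrCA. Qed.

Lemma dotv0 u : dotv u 0 = 0.
Proof. by rewrite /dotv big1 // => i _; rewrite mxE mulr0. Qed.

Lemma dotv_sum {I : finType} (P : {pred I}) u (f : I -> 'rV[R]_d) :
  dotv u (\sum_(n in P) f n) = \sum_(n in P) dotv u (f n).
Proof. exact: (big_morph (dotv u) (dotvD u) (dotv0 u)). Qed.

Lemma normv_ge0 u : 0 <= normv u.
Proof. exact: sqrtr_ge0. Qed.

Lemma coord_le_normv u i : `|u 0 i| <= normv u.
Proof.
have sq0 j : 0 <= u 0 j * u 0 j by rewrite -expr2 sqr_ge0.
rewrite /normv /dotv -sqrtr_sqr ler_sqrt; last exact: sumr_ge0.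
by rewrite expr2; exact: (ler_sum_term xpredT _ i isT (fun j _ => sq0 j)).
Qed.

Lemma dotv_le_normv_l1 u v A :
  normv u <= A -> `|dotv u v| <= A * \sum_i `|v 0 i|.
Proof.
move=> uA; rewrite /dotv mulr_sumr; apply: le_trans (ler_norm_sum _ _ _) _.
by apply: ler_sum => i _; rewrite normrM ler_wpM2r ?(le_trans (coord_le_normv _ _)).
Qed.

End Dot.

Section SGDStep.
Context {R : realType} {d N : nat}.
Variables (ell : R -> R) (eta : R) (B : nat) (x : 'I_N -> 'rV[R]_d).

Lemma dotv_sgd_step ws Bt w :
  dotv ws (sgd_step ell eta B x Bt w) =
  dotv ws w + eta / B%:R *
    \sum_(n in Bt) - derive1 ell (dotv w (x n)) * dotv ws (x n).
Proof.
rewrite /sgd_step dotvB dotvZ dotv_sum -mulrN -sumrN.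
by congr (_ + _ * _); apply: eq_bigr => n _; rewrite dotvZ mulNr.
Qed.

Lemma sgd_step_margin_ge ws (Bt : {set 'I_N}) w (m gamma : R) :
  0 <= eta -> 0 <= m -> 0 <= gamma -> (0 < #|Bt|)%N ->
  (forall n, gamma <= dotv ws (x n)) ->
  (forall n, n \in Bt -> m <= - derive1 ell (dotv w (x n))) ->
  dotv ws w + eta / B%:R * (m * gamma) <= dotv ws (sgd_step ell eta B x Bt w).
Proof.
move=> eta0 m0 gamma0 /card_gt0P[n0 Bn0] gamma_le m_le.
rewrite dotv_sgd_step lerD2l ler_wpM2l ?divr_ge0 //.
have term_ge0 n : n \in Bt -> 0 <= - derive1 ell (dotv w (x n)) * dotv ws (x n).
  by move=> Bn; rewrite mulr_ge0 // ?(le_trans m0 (m_le n Bn)) ?(le_trans gamma0).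
apply: le_trans (ler_sum_term _ _ n0 Bn0 term_ge0).
by rewrite ler_pM ?m_le.
Qed.

Lemma sgd_step_margin_mono ws (Bt : {set 'I_N}) w :
  0 <= eta -> (0 < #|Bt|)%N -> (forall n, 0 <= dotv ws (x n)) ->
  (forall u, derive1 ell u <= 0) ->
  dotv ws w <= dotv ws (sgd_step ell eta B x Bt w).
Proof.
move=> eta0 Bt_gt0 margin_ge0 ell'_le0.
have := sgd_step_margin_ge ws Bt w 0 0 eta0 (lexx 0) (lexx 0) Bt_gt0 margin_ge0.
by rewrite mul0r mulr0 addr0; apply=> n _; rewrite oppr_ge0.
Qed.

End SGDStep.

Arguments sgd_step_margin_ge {R d N ell eta B x ws Bt w m gamma}.
Arguments sgd_step_margin_mono {R d N ell eta B x ws Bt w}.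

Theorem lemma1 (R : realType) (d N : nat) (x : 'I_N -> 'rV[R]_d)
  (ell : R -> R) (beta eta : R) (B : nat)
  (w : nat -> 'rV[R]_d) (Bt : nat -> {set 'I_N}) :
  (exists wstar : 'rV[R]_d, forall n, 0 < dotv wstar (x n)) ->
  (forall u, 0 < ell u) ->
  (forall u, derivable ell u 1) ->
  (forall u v, `|derive1 ell u - derive1 ell v| <= beta * `|u - v|) ->
  (forall u, derive1 ell u < 0) ->
  ell u @[u --> +oo] --> 0 ->
  derive1 ell u @[u --> +oo] --> 0 ->
  limsup_ninfty (derive1 ell) != 0%E ->
  0 < eta ->
  (0 < B)%N -> (B %| N)%N ->
  (random_sampling_path B Bt \/ without_replacement B Bt) ->
  (forall t, w t.+1 = sgd_step ell eta B x (Bt t) (w t)) ->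
  normv (w t) @[t --> \oo] --> +oo.
Proof.
move=> [ws margin_gt0] _ _ lip ell'_lt0 _ _ _ eta0 B0 _ sampling hw.
have batch_gt0 t : (0 < #|Bt t|)%N.
  by case: sampling => [|[]] card_Bt; rewrite card_Bt.
have neg_deriv_gt0 u : 0 < - derive1 ell u by rewrite oppr_gt0.
have neg_deriv_cont : continuous (fun u => - derive1 ell u).
  by apply: (lipschitz_continuous _ beta) => u v; rewrite -opprD normrN.
have [gamma gamma0 gamma_le] := finite_pos_lbound _ margin_gt0.
have margin_mono : nondecreasing_seq (fun t => dotv ws (w t)).
  apply/nondecreasing_seqP => t; rewrite hw.
  by apply: sgd_step_margin_mono (ltW eta0) (batch_gt0 t) _ _ => [n|u]; exact: ltW.
apply/cvgryPge => A.
pose L := A * \sum_n \sum_i `|x n 0 i|.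
have [m m0 m_le] := continuous_pos_lbound_itv _ (- L) L neg_deriv_cont neg_deriv_gt0.
pose delta := eta / B%:R * (m * gamma).
have delta0 : 0 < delta by rewrite !mulr_gt0 ?invr_gt0 ?ltr0n.
have jump t : normv (w t) < A -> dotv ws (w t) + delta <= dotv ws (w t.+1).
  move=> /ltW wA; rewrite hw.
  apply: sgd_step_margin_ge (ltW eta0) (ltW m0) (ltW gamma0) (batch_gt0 t) _ _ => // n _.
  apply: m_le; rewrite -ler_norml; apply: le_trans (dotv_le_normv_l1 _ (x n) _ wA) _.
  rewrite ler_wpM2l ?(le_trans (normv_ge0 _) wA) //.
  by apply: (ler_sum_term xpredT _ n isT) => j _; exact: sumr_ge0.
have bounded t : normv (w t) < A -> dotv ws (w t) <= A * \sum_i `|ws 0 i|.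
  move=> /ltW wA; rewrite dotvC; apply: le_trans (ler_norm _) _.
  exact: dotv_le_normv_l1.
have := nondecreasing_jumps_eventually_stop _ _ _ _ delta0 margin_mono jump bounded.
by apply: filterS => t /negP; rewrite -leNgt.
Qed.
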